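(* Let $k\ge 2$ be an integer, and let $\alpha>1$ and $C>0$ be real numbers. Let $D:=\{z\in\mathbb{C}: |z|<2\}$. Then there exists a sequence $\{f_n\}_n$ of functions holomorphic in $D$ such that $$\frac{|f_n^{(k)}(z)|}{1+|f_n(z)|^\alpha}\le C \qquad\text{for all } z\in D \text{ and all } n,$$ but $\{f_n\}_n$ is not quasi-normal in $D$.
   Context: A family $\mathcal{F}$ of meromorphic functions in a domain $D\subseteq\mathbb{C}$ is called quasi-normal if from each sequence $\{f_n\}_n$ in $\mathcal{F}$ one can extract a subsequence which converges locally uniformly (with respect to the spherical metric, the limit $\infty$ being allowed) on $D\setminus E$, where the set $E$ (which may depend on the sequence) has no accumulation point in $D$. A sequence is called quasi-normal if the family of its members is quasi-normal. *)

From Stdlib Require Import Reals.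
From Coquelicot Require Import Coquelicot.
Open Scope R_scope.

Definition cdisk (a : C) (r : R) (z : C) : Prop := Cmod (Cminus z a) < r.

Definition Cderiv_at (f : C -> C) (z l : C) : Prop :=
  @is_derive C_AbsRing C_NormedModule f z l.

Definition holomorphic_on (D : C -> Prop) (f : C -> C) : Prop :=
  forall z, D z -> exists l, Cderiv_at f z l.

Definition kth_derivative_on (D : C -> Prop) (k : nat) (f g : C -> C) : Prop :=
  exists h : nat -> C -> C,
    h 0%nat = f /\ h k = g /\
    forall j, (j < k)%nat -> forall z, D z -> Cderiv_at (h j) z (h (S j) z).

(* x ^ a for x >= 0 (with 0 ^ a = 0 for a > 0) *)
Definition rpow (x a : R) : R := if Rle_dec x 0 then 0 else Rpower x a.

(* Riemann sphere: None = infinity; chordal (spherical) distance *)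
Definition Csph := option C.
Definition chordal (u v : Csph) : R :=
  match u, v with
  | Some a, Some b =>
      2 * Cmod (Cminus a b) / sqrt ((1 + Cmod a ^ 2) * (1 + Cmod b ^ 2))
  | Some a, None | None, Some a => 2 / sqrt (1 + Cmod a ^ 2)
  | None, None => 0
  end.

Definition accumulation_point (E : C -> Prop) (z : C) : Prop :=
  forall r, 0 < r -> exists w, E w /\ w <> z /\ cdisk z r w.

Definition no_accumulation_in (E D : C -> Prop) : Prop :=
  forall z, D z -> ~ accumulation_point E z.

(* g_m converges to h locally uniformly w.r.t. the spherical metric on U
   (limit infinity allowed, since h takes values in the Riemann sphere) *)
Definition loc_unif_sph_cvg (U : C -> Prop) (g : nat -> C -> C) (h : C -> Csph) : Prop :=
  forall z0, U z0 -> exists r, 0 < r /\ (forall z, cdisk z0 r z -> U z) /\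
    forall eps, 0 < eps -> exists N, forall m, (N <= m)%nat ->
      forall z, cdisk z0 r z -> chordal (Some (g m z)) (h z) < eps.

Definition quasi_normal_family (F : (C -> C) -> Prop) (D : C -> Prop) : Prop :=
  forall g : nat -> C -> C, (forall m, F (g m)) ->
    exists (phi : nat -> nat) (E : C -> Prop) (h : C -> Csph),
      (forall m, (phi m < phi (S m))%nat) /\
      no_accumulation_in E D /\
      loc_unif_sph_cvg (fun z => D z /\ ~ E z) (fun m => g (phi m)) h.

Definition quasi_normal_seq (f : nat -> C -> C) (D : C -> Prop) : Prop :=
  quasi_normal_family (fun g => exists n, g = f n) D.

(* The functions are [f_n = L * P (sin (nu_n z))] with frequencies [nu_n = 2^n (n+1)!].
   Since [s = sin (nu z)] and [c = cos (nu z)] satisfy [s' = nu c], [c' = - nu s] and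
   [c^2 = 1 - s^2], the k-th derivative is [L nu^k P_k(s)] (times [c] for odd [k]) for
   polynomials [P_k] given by a linear recursion.  For [P(s) = s (1 + g s^(2m) / N)^N],
   [m = k / 2], where [g] cancels the [w^(2m+1)] Taylor coefficient of [P (sin w)],
   [P_k] vanishes to order two at [s = 0], while [N] large keeps the factor
   [(1 + g s^(2m) / N)^N] between [2^-N] and [(3/2)^N].  Hence [|f^(k)| <= K |f|^2 / L]
   and [|f| <= L G]; taking [L = X^(1/(b-1))], [b = min alpha 2], turns this into
   [|f^(k)| <= C (1 + |f|^alpha)].
   On the real axis [f_n] vanishes where [sin (nu_n x) = 0] and has modulus at least 1
   where [|sin (nu_n x)| = 1].  Near a point [PI / q] off the exceptional set, the points
   [x = PI / q + PI / (2 nu_n')] satisfy [|f_n' x| >= 1] and [f_n x = 0] for all [n > n']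
   (both [q] and [2 nu_n'] divide [nu_n]), so two consecutive terms of a subsequence cannot
   both be spherically close to the limit at [x]. *)

From Stdlib Require Import Reals Lra Lia List IndefiniteDescription Classical.
From Coquelicot Require Import Coquelicot.
Open Scope R_scope.

(** * Complex exponential and trigonometric functions *)

Ltac Cring := cbv beta; match goal with |- ?a = ?b => change (@eq C a b) end; ring.

Definition cexp (z : C) : C := (exp (fst z) * cos (snd z), exp (fst z) * sin (snd z)).

Lemma cexp_add (a b : C) : cexp (a + b)%C = (cexp a * cexp b)%C.
Proof.
  destruct a as [a1 a2], b as [b1 b2]; unfold cexp, Cplus, Cmult; simpl.
  rewrite exp_plus, cos_plus, sin_plus; f_equal; ring.
Qed.

Lemma cexp_0 : cexp 0 = 1.
Proof. unfold cexp, RtoC; simpl; rewrite exp_0, cos_0, sin_0; f_equal; ring. Qed.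

Lemma Cmod_cexp (z : C) : Cmod (cexp z) = exp (fst z).
Proof.
  destruct z as [a b]; unfold Cmod, cexp; cbn [fst snd].
  pose proof (sin2_cos2 b) as Hsc; unfold Rsqr in Hsc.
  replace ((exp a * cos b) ^ 2 + (exp a * sin b) ^ 2) with (exp a ^ 2) by (simpl; nra).
  apply sqrt_pow2; left; apply exp_pos.
Qed.

Lemma exp_le_compat (x y : R) : x <= y -> exp x <= exp y.
Proof. intros [Hlt| ->]; [left; apply exp_increasing, Hlt | right; reflexivity]. Qed.

Lemma Cmod_cexp_le (z : C) : Cmod (cexp z) <= exp (Cmod z).
Proof.
  rewrite Cmod_cexp; apply exp_le_compat.
  exact (Rle_trans _ _ _ (RRle_abs _) (re_le_Cmod z)).
Qed.

Lemma exp_sub_1_sub_bound (a : R) : Rabs a <= 1/2 -> 0 <= exp a - 1 - a <= 2 * a ^ 2.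
Proof.
  intros Ha; apply Rabs_le_between in Ha.
  pose proof (exp_ineq1_le a); pose proof (exp_ineq1_le (- a)); pose proof (exp_pos a).
  assert (Hinv : exp a * exp (- a) = 1) by (rewrite <- exp_plus, Rplus_opp_r; apply exp_0).
  split; [lra|].
  (* [exp a <= 1 / (1 - a) <= 1 + a + 2 a^2] *)
  assert (exp a * (1 - a) <= 1) by (rewrite <- Hinv; apply Rmult_le_compat_l; lra).
  assert (1 <= (1 - a) * (1 + a + 2 * a ^ 2)) by (simpl; nra).
  simpl in *; nra.
Qed.

Lemma cos_sub_1_bound (b : R) : Rabs b <= 1/2 -> Rabs (cos b - 1) <= b ^ 2 / 2.
Proof.
  intros Hb; apply Rabs_le_between in Hb.
  destruct (pre_cos_bound b 0) as [Hlb _]; try lra.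
  unfold cos_approx, cos_term in Hlb; simpl in Hlb.
  pose proof (COS_bound b).
  rewrite Rabs_left1 by lra; simpl; lra.
Qed.

Lemma sin_sub_id_bound (b : R) : Rabs b <= 1/2 -> Rabs (sin b - b) <= b ^ 2.
Proof.
  assert (Hpos : forall b, 0 <= b <= 1/2 -> Rabs (sin b - b) <= b ^ 2).
  { intros x Hx; destruct (pre_sin_bound x 0) as [Hlb _]; [lra|lra|].
    unfold sin_approx, sin_term in Hlb; simpl in Hlb.
    assert (sin x <= x)
      by (destruct (Req_dec x 0) as [->|]; [rewrite sin_0; lra | left; apply sin_lt_x; lra]).
    apply Rabs_le; split; nra. }
  intros Hb; destruct (Rle_dec 0 b) as [Hb0|Hb0].
  - rewrite Rabs_pos_eq in Hb by lra; apply Hpos; lra.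
  - rewrite Rabs_left in Hb by lra.
    replace (sin b - b) with (- (sin (- b) - - b)) by (rewrite sin_neg; ring).
    rewrite Rabs_Ropp; replace (b ^ 2) with ((- b) ^ 2) by ring; apply Hpos; lra.
Qed.

Lemma Cmod_le_Rabs_add (x y : R) : Cmod (x, y) <= Rabs x + Rabs y.
Proof.
  unfold Cmod; cbn [fst snd].
  pose proof (Rabs_pos x); pose proof (Rabs_pos y).
  rewrite <- (sqrt_pow2 (Rabs x + Rabs y)) by lra; apply sqrt_le_1_alt.
  rewrite <- (pow2_abs x), <- (pow2_abs y); simpl; nra.
Qed.

Lemma exp_cos_sub_bound (a b : R) :
  Rabs a <= 1/2 -> Rabs b <= 1/2 -> Rabs (exp a * cos b - 1 - a) <= 2 * a ^ 2 + b ^ 2.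
Proof.
  intros Ha Hb.
  destruct (exp_sub_1_sub_bound a Ha) as [E1 E2]; pose proof (cos_sub_1_bound b Hb).
  assert (Ea : exp a <= 2).
  { apply Rabs_le_between in Ha; assert (a ^ 2 <= 1/4) by (simpl; nra); lra. }
  replace (exp a * cos b - 1 - a) with ((exp a - 1 - a) + exp a * (cos b - 1)) by ring.
  eapply Rle_trans; [apply Rabs_triang|].
  pose proof (exp_pos a); pose proof (Rabs_pos (cos b - 1)).
  rewrite Rabs_mult, (Rabs_pos_eq (exp a - 1 - a)), (Rabs_pos_eq (exp a)) by lra.
  nra.
Qed.

Lemma exp_sin_sub_bound (a b : R) :
  Rabs a <= 1/2 -> Rabs b <= 1/2 -> Rabs (exp a * sin b - b) <= a ^ 2 + 3 * b ^ 2.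
Proof.
  intros Ha Hb.
  destruct (exp_sub_1_sub_bound a Ha) as [E1 E2]; pose proof (sin_sub_id_bound b Hb).
  assert (Rabs (exp a - 1) <= 2 * Rabs a).
  { apply Rabs_le; destruct (Rle_dec 0 a);
      [rewrite Rabs_pos_eq in * by lra | rewrite Rabs_left in * by lra]; simpl in *; nra. }
  replace (exp a * sin b - b)
    with ((exp a - 1) * (sin b - b) + (exp a - 1) * b + (sin b - b)) by ring.
  eapply Rle_trans; [apply Rabs_triang|].
  eapply Rle_trans; [apply Rplus_le_compat_r, Rabs_triang|]; rewrite !Rabs_mult.
  pose proof (Rabs_pos a); pose proof (Rabs_pos b); pose proof (Rabs_pos (exp a - 1)).
  assert (Rabs (exp a - 1) * Rabs (sin b - b) <= 1 * b ^ 2)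
    by (apply Rmult_le_compat; try apply Rabs_pos; lra).
  assert (Rabs (exp a - 1) * Rabs b <= a ^ 2 + b ^ 2).
  { rewrite <- (pow2_abs a), <- (pow2_abs b); pose proof (pow2_ge_0 (Rabs a - Rabs b)).
    simpl in *; nra. }
  lra.
Qed.

Lemma cexp_sub_1_sub_bound (h : C) :
  Cmod h <= 1/2 -> Cmod (cexp h - 1 - h)%C <= 4 * Cmod h ^ 2.
Proof.
  destruct h as [a b]; intros Hh.
  pose proof (Rmax_Cmod (a, b)) as Hmax; cbn [fst snd] in Hmax.
  pose proof (Rmax_l (Rabs a) (Rabs b)); pose proof (Rmax_r (Rabs a) (Rabs b)).
  assert (Ha : Rabs a <= 1/2) by lra.
  assert (Hb : Rabs b <= 1/2) by lra.
  rewrite Cmod2_alt; unfold Re, Im; cbn [fst snd].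
  replace (cexp (a, b) - 1 - (a, b))%C with (exp a * cos b - 1 - a, exp a * sin b - b)
    by (unfold cexp, Cminus, Cplus, Copp, RtoC; cbn [fst snd]; f_equal; ring).
  eapply Rle_trans; [apply Cmod_le_Rabs_add|].
  pose proof (exp_cos_sub_bound a b Ha Hb); pose proof (exp_sin_sub_bound a b Ha Hb).
  pose proof (pow2_ge_0 a); lra.
Qed.

(* [Cderiv_at] lives on [C_NormedModule]; Coquelicot's product and identity rules are
   stated on [AbsRing_NormedModule C_AbsRing], which is isomorphic but not convertible. *)
Lemma Cderiv_of_AbsRing (f : C -> C) (z l : C) :
  @is_derive C_AbsRing (AbsRing_NormedModule C_AbsRing) f z l -> Cderiv_at f z l.
Proof.
  intros [[Hadd Hscal [M [HM Hnorm]]] Hlim]; split.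
  - split; [exact Hadd | exact Hscal |]; exists M; split; [exact HM | exact Hnorm].
  - exact Hlim.
Qed.

Lemma Cderiv_to_AbsRing (f : C -> C) (z l : C) :
  Cderiv_at f z l -> @is_derive C_AbsRing (AbsRing_NormedModule C_AbsRing) f z l.
Proof.
  intros [[Hadd Hscal [M [HM Hnorm]]] Hlim]; split.
  - split; [exact Hadd | exact Hscal |]; exists M; split; [exact HM | exact Hnorm].
  - exact Hlim.
Qed.

Lemma Cderiv_at_eq (f : C -> C) (z l l' : C) : Cderiv_at f z l -> l = l' -> Cderiv_at f z l'.
Proof. now intros H <-. Qed.

Lemma Cderiv_at_ext (f g : C -> C) (z l : C) :
  (forall t, f t = g t) -> Cderiv_at f z l -> Cderiv_at g z l.
Proof. apply is_derive_ext. Qed.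

Lemma Cderiv_const (a z : C) : Cderiv_at (fun _ => a) z 0.
Proof. apply (@is_derive_const C_AbsRing C_NormedModule). Qed.

Lemma Cderiv_id (z : C) : Cderiv_at (fun t => t) z 1.
Proof. apply Cderiv_of_AbsRing, (@is_derive_id C_AbsRing). Qed.

Lemma Cderiv_add (f g : C -> C) (z df dg : C) :
  Cderiv_at f z df -> Cderiv_at g z dg -> Cderiv_at (fun t => f t + g t)%C z (df + dg)%C.
Proof. apply (@is_derive_plus C_AbsRing C_NormedModule). Qed.

Lemma Cderiv_mul (f g : C -> C) (z df dg : C) :
  Cderiv_at f z df -> Cderiv_at g z dg ->
  Cderiv_at (fun t => f t * g t)%C z (df * g z + f z * dg)%C.
Proof.
  intros Hf Hg; apply Cderiv_of_AbsRing.
  apply (@is_derive_mult C_AbsRing); try apply Cderiv_to_AbsRing; auto.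
  intros; apply Cmult_comm.
Qed.

Lemma Cderiv_comp (f g : C -> C) (z df dg : C) :
  Cderiv_at f (g z) df -> Cderiv_at g z dg -> Cderiv_at (fun t => f (g t)) z (dg * df)%C.
Proof.
  intros Hf Hg; apply (@is_derive_comp C_AbsRing C_NormedModule); [exact Hf|].
  now apply Cderiv_to_AbsRing.
Qed.

Lemma Cderiv_scal_l (f : C -> C) (a z df : C) :
  Cderiv_at f z df -> Cderiv_at (fun t => a * f t)%C z (a * df)%C.
Proof.
  intros Hf; eapply Cderiv_at_eq; [apply Cderiv_mul; [apply Cderiv_const | exact Hf]|].
  Cring.
Qed.

Lemma Cderiv_opp (f : C -> C) (z df : C) :
  Cderiv_at f z df -> Cderiv_at (fun t => - f t)%C z (- df)%C.
Proof. apply (@is_derive_opp C_AbsRing C_NormedModule). Qed.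

Lemma Cderiv_comp_scal (f : C -> C) (a z l : C) :
  Cderiv_at f (a * z)%C l -> Cderiv_at (fun t => f (a * t))%C z (a * l)%C.
Proof.
  intros Hf; eapply Cderiv_at_eq.
  - apply (Cderiv_comp f (fun t => a * t)%C); [exact Hf | apply Cderiv_scal_l, Cderiv_id].
  - Cring.
Qed.

Lemma Cderiv_cexp_0 : Cderiv_at cexp 0 1.
Proof.
  split; [apply is_linear_scal_l|].
  intros x Hx.
  apply (is_filter_lim_locally_unique (K := C_AbsRing) (V := AbsRing_NormedModule C_AbsRing)) in Hx.
  subst x; intros eps.
  apply (locally_norm_le_locally (K := C_AbsRing) (V := AbsRing_NormedModule C_AbsRing)).
  assert (Hd : 0 < Rmin (1/2) (eps / 4)) by (apply Rmin_case; destruct eps; simpl; lra).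
  exists (mkposreal _ Hd); intros y Hy; change C in y.
  change (Cmod (cexp y - cexp 0 - (y - 0) * 1)%C <= eps * Cmod (y - 0)%C).
  assert (Hy' : Cmod (y - 0)%C < Rmin (1/2) (eps / 4)) by exact Hy.
  replace (y - 0)%C with y in * by Cring.
  rewrite cexp_0; replace (y * 1)%C with y by Cring.
  pose proof (Rmin_l (1/2) (eps / 4)); pose proof (Rmin_r (1/2) (eps / 4)).
  eapply Rle_trans; [apply cexp_sub_1_sub_bound; lra|].
  pose proof (Cmod_ge_0 y); destruct eps as [eps Heps]; simpl in *; nra.
Qed.

Lemma Cderiv_cexp (z : C) : Cderiv_at cexp z (cexp z).
Proof.
  apply (Cderiv_at_ext (fun y => cexp z * cexp (y - z))%C).
  { intros y; rewrite <- cexp_add; f_equal; Cring. }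
  eapply Cderiv_at_eq.
  - apply Cderiv_scal_l, (Cderiv_comp cexp (fun y => y - z)%C).
    + replace (z - z)%C with (RtoC 0) by Cring; apply Cderiv_cexp_0.
    + eapply Cderiv_at_eq; [apply Cderiv_add; [apply Cderiv_id | apply Cderiv_const]|].
      reflexivity.
  - Cring.
Qed.

Lemma Cderiv_cexp_scal (c z : C) : Cderiv_at (fun t => cexp (c * t))%C z (c * cexp (c * z))%C.
Proof.
  eapply Cderiv_at_eq.
  - apply (Cderiv_comp cexp (fun t => c * t)%C); [apply Cderiv_cexp|].
    apply Cderiv_scal_l, Cderiv_id.
  - Cring.
Qed.

Definition csin (w : C) : C := (- Ci / 2 * (cexp (Ci * w) - cexp (- Ci * w)))%C.
Definition ccos (w : C) : C := ((cexp (Ci * w) + cexp (- Ci * w)) / 2)%C.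

Lemma Ci_sqr : (Ci * Ci)%C = (- 1)%C.
Proof. unfold Ci, Cmult, Copp, RtoC; simpl; f_equal; ring. Qed.

Lemma C2_neq_0 : RtoC 2 <> 0%C.
Proof. intros H; apply RtoC_inj in H; lra. Qed.

Ltac Cfield := cbv beta; match goal with |- ?a = ?b => change (@eq C a b) end;
  field; try exact C2_neq_0.

Lemma csin2_add_ccos2 (w : C) : (csin w * csin w + ccos w * ccos w)%C = 1.
Proof.
  unfold csin, ccos; set (e1 := cexp (Ci * w)); set (e2 := cexp (- Ci * w)).
  assert (Hprod : (e1 * e2)%C = 1).
  { unfold e1, e2; rewrite <- cexp_add, <- cexp_0; f_equal; Cring. }
  transitivity (e1 * e2 + (Ci * Ci + 1) * ((e1 - e2) * (e1 - e2) / (2 * 2)))%C.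
  - Cfield.
  - rewrite Ci_sqr, Hprod; Cring.
Qed.

Lemma Cderiv_csin (w : C) : Cderiv_at csin w (ccos w).
Proof.
  eapply Cderiv_at_eq.
  - apply Cderiv_scal_l, Cderiv_add; [|apply Cderiv_opp]; apply Cderiv_cexp_scal.
  - unfold ccos; transitivity (- (Ci * Ci) * ((cexp (Ci * w) + cexp (- Ci * w)) / 2))%C.
    + Cfield.
    + rewrite Ci_sqr; Cfield.
Qed.

Lemma Cderiv_ccos (w : C) : Cderiv_at ccos w (- csin w)%C.
Proof.
  eapply Cderiv_at_eq.
  - apply (Cderiv_mul (fun t => cexp (Ci * t) + cexp (- Ci * t))%C (fun _ => / 2)%C).
    + apply Cderiv_add; apply Cderiv_cexp_scal.
    + apply Cderiv_const.
  - unfold csin; Cfield.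
Qed.

Lemma cexp_Ci_mul_R (x : R) : cexp (Ci * x) = (cos x + Ci * sin x)%C.
Proof.
  replace (Ci * x)%C with (0, x) by (unfold Ci, Cmult, RtoC; simpl; f_equal; ring).
  unfold cexp, Ci, Cmult, Cplus, RtoC; simpl; rewrite exp_0; f_equal; ring.
Qed.

Lemma csin_R (x : R) : csin x = sin x.
Proof.
  unfold csin; replace (- Ci * x)%C with (Ci * (- x)%R)%C by (rewrite RtoC_opp; Cring).
  rewrite !cexp_Ci_mul_R, cos_neg, sin_neg, RtoC_opp.
  transitivity (- (Ci * Ci) * sin x)%C; [Cfield | rewrite Ci_sqr; Cring].
Qed.

Lemma Cmod_Ci_mul (w : C) : Cmod (Ci * w) = Cmod w.
Proof. rewrite Cmod_mult, Cmod_Ci; ring. Qed.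

Lemma Cmod_cexp_Ci_add_le (w : C) :
  Cmod (cexp (Ci * w)) + Cmod (cexp (- Ci * w)) <= 2 * exp (Cmod w).
Proof.
  pose proof (Cmod_cexp_le (Ci * w)); pose proof (Cmod_cexp_le (- Ci * w)).
  replace (- Ci * w)%C with (- (Ci * w))%C in * by Cring.
  rewrite Cmod_opp, Cmod_Ci_mul in *; lra.
Qed.

Lemma Cmod_half_le (u v : C) (b : R) :
  Cmod u = 1 -> Cmod v <= 2 * b -> Cmod (u / 2 * v)%C <= b.
Proof.
  intros Hu Hv; rewrite Cmod_mult, Cmod_div, Cmod_R, Rabs_pos_eq, Hu by (lra || exact C2_neq_0).
  lra.
Qed.

Lemma Cmod_csin_le (w : C) : Cmod (csin w) <= exp (Cmod w).
Proof.
  apply Cmod_half_le; [rewrite Cmod_opp; apply Cmod_Ci|].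
  eapply Rle_trans; [apply Cmod_triangle|]; rewrite Cmod_opp; apply Cmod_cexp_Ci_add_le.
Qed.

Lemma Cmod_ccos_le (w : C) : Cmod (ccos w) <= exp (Cmod w).
Proof.
  unfold ccos; replace (_ / 2)%C with (1 / 2 * (cexp (Ci * w) + cexp (- Ci * w)))%C by Cfield.
  apply Cmod_half_le; [apply Cmod_1|].
  eapply Rle_trans; [apply Cmod_triangle | apply Cmod_cexp_Ci_add_le].
Qed.

(** * Real polynomials at complex points *)

(* Coefficient lists, constant term first. *)
Fixpoint peval (p : list R) (s : C) : C :=
  match p with nil => 0%C | a :: q => (a + s * peval q s)%C end.

Fixpoint padd (p q : list R) : list R :=
  match p, q with
  | nil, _ => q
  | _, nil => p
  | a :: p', b :: q' => (a + b) :: padd p' q'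
  end.

Definition pscale (c : R) (p : list R) : list R := map (Rmult c) p.

Definition pmulX (p : list R) : list R := 0 :: p.

Fixpoint pmulXn (n : nat) (p : list R) : list R :=
  match n with O => p | S n => pmulX (pmulXn n p) end.

Fixpoint pderiv (p : list R) : list R :=
  match p with nil => nil | a :: q => padd q (pmulX (pderiv q)) end.

Definition pcoef (p : list R) (d : nat) : R := nth d p 0.

Lemma peval_add (p q : list R) (s : C) : peval (padd p q) s = (peval p s + peval q s)%C.
Proof.
  revert q; induction p as [|a p IH]; intros [|b q]; simpl; try Cring.
  rewrite IH, RtoC_plus; Cring.
Qed.

Lemma peval_scale (c : R) (p : list R) (s : C) : peval (pscale c p) s = (c * peval p s)%C.
Proof.
  induction p as [|a p IH]; [simpl; Cring|].
  unfold pscale in *; simpl; rewrite IH, RtoC_mult; Cring.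
Qed.

Lemma peval_mulXn (n : nat) (p : list R) (s : C) : peval (pmulXn n p) s = (s ^ n * peval p s)%C.
Proof.
  induction n as [|n IH]; simpl; [Cring|]; rewrite IH; Cring.
Qed.

Lemma pcoef_nil (d : nat) : pcoef nil d = 0.
Proof. now destruct d. Qed.

Lemma pcoef_add (p q : list R) (d : nat) : pcoef (padd p q) d = pcoef p d + pcoef q d.
Proof.
  revert q d; induction p as [|a p IH]; intros [|b q] d; simpl; try (rewrite pcoef_nil; ring).
  destruct d; unfold pcoef; simpl; [ring | apply IH].
Qed.

Lemma pcoef_scale (c : R) (p : list R) (d : nat) : pcoef (pscale c p) d = c * pcoef p d.
Proof.
  unfold pcoef, pscale; revert d; induction p as [|a p IH]; intros [|d]; simpl; try ring.
  apply IH.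
Qed.

Lemma pcoef_deriv (p : list R) (d : nat) : pcoef (pderiv p) d = INR (S d) * pcoef p (S d).
Proof.
  revert d; induction p as [|a p IH]; intros d; simpl pderiv.
  - rewrite !pcoef_nil; ring.
  - rewrite pcoef_add; destruct d as [|d]; [unfold pcoef; simpl; ring|].
    change (pcoef (pmulX (pderiv p)) (S d)) with (pcoef (pderiv p) d).
    rewrite IH; unfold pcoef; simpl nth; rewrite !S_INR; ring.
Qed.

Lemma pcoef_mulX_0 (p : list R) : pcoef (pmulX p) 0 = 0.
Proof. reflexivity. Qed.

Lemma pcoef_mulX_S (p : list R) (d : nat) : pcoef (pmulX p) (S d) = pcoef p d.
Proof. reflexivity. Qed.

Lemma pcoef_mulXn_lt (n : nat) (p : list R) (d : nat) : (d < n)%nat -> pcoef (pmulXn n p) d = 0.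
Proof.
  revert d; induction n as [|n IH]; intros d Hd; [lia|].
  destruct d as [|d]; [reflexivity|]; apply IH; lia.
Qed.

Lemma pcoef_mulXn_add (n : nat) (p : list R) (d : nat) : pcoef (pmulXn n p) (n + d) = pcoef p d.
Proof. induction n as [|n IH]; [reflexivity | exact IH]. Qed.

Lemma peval_factor_sqr (p : list R) (s : C) :
  pcoef p 0 = 0 -> pcoef p 1 = 0 -> peval p s = (s * s * peval (skipn 2 p) s)%C.
Proof.
  unfold pcoef; intros H0 H1; destruct p as [|a [|b q]]; simpl in *; subst; Cring.
Qed.

Lemma Cderiv_peval (p : list R) (z : C) : Cderiv_at (peval p) z (peval (pderiv p) z).
Proof.
  induction p as [|a p IH]; simpl.
  - apply Cderiv_const.
  - eapply Cderiv_at_eq.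
    + apply Cderiv_add; [apply Cderiv_const | apply Cderiv_mul; [apply Cderiv_id | exact IH]].
    + rewrite peval_add; simpl; Cring.
Qed.

Fixpoint pnorm (p : list R) (r : R) : R :=
  match p with nil => 0 | a :: q => Rabs a + r * pnorm q r end.

Lemma pnorm_ge_0 (p : list R) (r : R) : 0 <= r -> 0 <= pnorm p r.
Proof. intros Hr; induction p as [|a p IH]; simpl; [lra|]; pose proof (Rabs_pos a); nra. Qed.

Lemma Cmod_peval_le (p : list R) (s : C) (r : R) : Cmod s <= r -> Cmod (peval p s) <= pnorm p r.
Proof.
  intros Hs; induction p as [|a p IH]; simpl.
  - rewrite Cmod_0; lra.
  - eapply Rle_trans; [apply Cmod_triangle|]; rewrite Cmod_R, Cmod_mult.
    pose proof (Cmod_ge_0 s); pose proof (Cmod_ge_0 (peval p s)).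
    assert (Cmod s * Cmod (peval p s) <= r * pnorm p r) by (apply Rmult_le_compat; auto).
    lra.
Qed.

(** * Derivatives of [P (sin (nu z))] *)

(* [(1 - s^2) p' - s p]: differentiating [cos w * p (sin w)] and using [cos^2 = 1 - sin^2]. *)
Definition pcos_step (p : list R) : list R :=
  padd (padd (pderiv p) (pscale (-1) (pmulX (pmulX (pderiv p))))) (pscale (-1) (pmulX p)).

(* [(d/dw)^j P(sin w)] is [P_j(sin w)] for even [j] and [cos w * P_j(sin w)] for odd [j]. *)
Fixpoint psin_chain (P : list R) (j : nat) : list R :=
  match j with
  | O => P
  | S j => if Nat.even j then pderiv (psin_chain P j) else pcos_step (psin_chain P j)
  end.

Definition sin_chain (nu L : R) (P : list R) (j : nat) (z : C) : C :=
  (L * nu ^ j * (if Nat.even j then peval (psin_chain P j) (csin (nu * z))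
                 else ccos (nu * z) * peval (psin_chain P j) (csin (nu * z))))%C.

Lemma Cderiv_peval_csin (nu : R) (p : list R) (z : C) :
  Cderiv_at (fun t => peval p (csin (nu * t))) z
            (nu * ccos (nu * z) * peval (pderiv p) (csin (nu * z)))%C.
Proof.
  eapply Cderiv_at_eq.
  - apply (Cderiv_comp (peval p) (fun t => csin (nu * t))); [apply Cderiv_peval|].
    apply Cderiv_comp_scal, Cderiv_csin.
  - reflexivity.
Qed.

Lemma Cderiv_sin_chain (nu L : R) (P : list R) (j : nat) (z : C) :
  Cderiv_at (sin_chain nu L P j) z (sin_chain nu L P (S j) z).
Proof.
  unfold sin_chain; cbn [psin_chain Cpow]; rewrite Nat.even_succ, <- Nat.negb_even.
  destruct (Nat.even j); cbn [negb].
  - eapply Cderiv_at_eq; [apply Cderiv_scal_l, Cderiv_peval_csin | Cring].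
  - eapply Cderiv_at_eq.
    + apply Cderiv_scal_l, Cderiv_mul;
        [apply Cderiv_comp_scal, Cderiv_ccos | apply Cderiv_peval_csin].
    + unfold pcos_step; rewrite !peval_add, !peval_scale; cbn [peval pmulX].
      pose proof (csin2_add_ccos2 (nu * z)) as Hpyth.
      set (s := csin (nu * z)) in *; set (c := ccos (nu * z)) in *.
      set (q := psin_chain P j).
      transitivity (L * nu ^ j * nu * (c * c * peval (pderiv q) s - s * peval q s))%C; [Cring|].
      replace (c * c)%C with (1 - s * s)%C by (rewrite <- Hpyth; Cring).
      Cring.
Qed.

(** * The profile polynomial *)

Definition coef_step2 (a : nat -> R) (d : nat) : R :=
  INR (S d) * INR (S (S d)) * a (S (S d)) - INR d * INR d * a d.

Fixpoint coef_step2_iter (i : nat) (a : nat -> R) : nat -> R :=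
  match i with O => a | S i => coef_step2 (coef_step2_iter i a) end.

Lemma pcoef_pcos_step_pderiv (p : list R) (d : nat) :
  pcoef (pcos_step (pderiv p)) d = coef_step2 (pcoef p) d.
Proof.
  unfold pcos_step, coef_step2; rewrite !pcoef_add, !pcoef_scale, !pcoef_deriv.
  destruct d as [|[|d]]; rewrite ?pcoef_mulX_0, ?pcoef_mulX_S, ?pcoef_mulX_0, ?pcoef_deriv;
    rewrite ?S_INR; simpl INR; ring.
Qed.

Lemma pcoef_psin_chain_even (P : list R) (i d : nat) :
  pcoef (psin_chain P (2 * i)) d = coef_step2_iter i (pcoef P) d.
Proof.
  revert d; induction i as [|i IH]; intros d; [reflexivity|].
  replace (2 * S i)%nat with (S (S (2 * i))) by lia; cbn [psin_chain].
  rewrite Nat.even_succ, <- Nat.negb_even, Nat.even_mul; cbn [negb Nat.even orb].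
  rewrite pcoef_pcos_step_pderiv; cbn [coef_step2_iter]; unfold coef_step2.
  rewrite !IH; reflexivity.
Qed.

Lemma coef_step2_iter_ext (i : nat) (a b : nat -> R) :
  (forall d, a d = b d) -> forall d, coef_step2_iter i a d = coef_step2_iter i b d.
Proof.
  intros Hab; induction i as [|i IH]; intros d; cbn [coef_step2_iter]; [apply Hab|].
  unfold coef_step2; rewrite !IH; reflexivity.
Qed.

Lemma coef_step2_iter_add (i : nat) (a b : nat -> R) (d : nat) :
  coef_step2_iter i (fun e => a e + b e) d = coef_step2_iter i a d + coef_step2_iter i b d.
Proof.
  revert d; induction i as [|i IH]; intros d; cbn [coef_step2_iter]; [reflexivity|].
  unfold coef_step2; rewrite !IH; ring.
Qed.

Lemma coef_step2_iter_lowest (i v : nat) (a : nat -> R) :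
  (forall e, (e < v + 2 * i)%nat -> a e = 0) ->
  (forall e, (e < v)%nat -> coef_step2_iter i a e = 0) /\
  coef_step2_iter i a v * INR (Factorial.fact v)
  = INR (Factorial.fact (v + 2 * i)) * a (v + 2 * i)%nat.
Proof.
  revert v; induction i as [|i IH]; intros v Ha.
  - split; [intros e He; apply Ha; lia | rewrite Nat.add_0_r; simpl; ring].
  - destruct (IH (S (S v))) as [Hlow Hval]; [intros e He; apply Ha; lia|].
    replace (v + 2 * S i)%nat with (S (S v) + 2 * i)%nat by lia.
    cbn [coef_step2_iter]; unfold coef_step2; split.
    + intros e He; rewrite !Hlow by lia; ring.
    + rewrite (Hlow v) by lia; rewrite <- Hval.
      change (Factorial.fact (S (S v))) with (S (S v) * (S v * Factorial.fact v))%nat.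
      rewrite !mult_INR; ring.
Qed.

Lemma coef_step2_iter_odd (i : nat) (a : nat -> R) :
  (forall e, Nat.even e = true -> a e = 0) ->
  forall e, Nat.even e = true -> coef_step2_iter i a e = 0.
Proof.
  intros Ha; induction i as [|i IH]; intros e He; cbn [coef_step2_iter]; [now apply Ha|].
  unfold coef_step2; rewrite !IH by assumption; ring.
Qed.

Lemma coef_step2_iter_X (i d : nat) :
  coef_step2_iter i (pcoef (0 :: 1 :: nil)) d = (-1) ^ i * pcoef (0 :: 1 :: nil) d.
Proof.
  revert d; induction i as [|i IH]; intros d; cbn [coef_step2_iter]; [simpl; ring|].
  unfold coef_step2; rewrite !IH.
  destruct d as [|[|d]]; unfold pcoef; simpl nth; try (destruct d); simpl; ring.
Qed.

(* [sin_profile_coef m] cancels the coefficient of [w^(2m+1)] in the Taylor expansion of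
   [sin w + sin_profile_coef m * sin w ^ (2m+1)]. *)
Definition sin_profile_coef (m : nat) : R := - (-1) ^ m / INR (Factorial.fact (2 * m + 1)).

Definition psin_profile (m : nat) (W : list R) : list R :=
  padd (0 :: 1 :: nil)
       (padd (pmulXn (2 * m + 1) (sin_profile_coef m :: nil)) (pmulXn (4 * m + 1) W)).

Lemma pcoef_mulXn_const_even (m : nat) (c : R) (e : nat) :
  Nat.even e = true -> pcoef (pmulXn (2 * m + 1) (c :: nil)) e = 0.
Proof.
  intros He; destruct (Nat.lt_ge_cases e (2 * m + 1)) as [Hlt|Hge].
  - now apply pcoef_mulXn_lt.
  - replace e with (2 * m + 1 + (e - (2 * m + 1)))%nat by lia; rewrite pcoef_mulXn_add.
    destruct (e - (2 * m + 1))%nat as [|[|d]] eqn:Hd; try reflexivity.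
    replace e with (2 * m + 1)%nat in He by lia.
    rewrite Nat.even_add, Nat.even_mul in He; discriminate.
Qed.

Lemma coef_step2_iter_profile (m : nat) (W : list R) :
  (1 <= m)%nat -> forall d, (d <= 2)%nat -> coef_step2_iter m (pcoef (psin_profile m W)) d = 0.
Proof.
  intros Hm d Hd.
  set (g := pcoef (pmulXn (2 * m + 1) (sin_profile_coef m :: nil))).
  set (h := pcoef (pmulXn (4 * m + 1) W)).
  rewrite (coef_step2_iter_ext m _ (fun e => pcoef (0 :: 1 :: nil) e + (g e + h e)))
    by (intros; unfold psin_profile; rewrite !pcoef_add; reflexivity).
  rewrite !coef_step2_iter_add, coef_step2_iter_X.
  destruct (coef_step2_iter_lowest m 1 g) as [Hg0 Hg1].
  { intros e He; apply pcoef_mulXn_lt; lia. }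
  destruct (coef_step2_iter_lowest m 3 h) as [Hh _].
  { intros e He; apply pcoef_mulXn_lt; lia. }
  rewrite Hh by lia.
  destruct d as [|[|[|d]]]; [| | |lia].
  - rewrite Hg0 by lia; unfold pcoef; simpl; ring.
  - pose proof (pcoef_mulXn_add (2 * m + 1) (sin_profile_coef m :: nil) 0) as Hgtop.
    rewrite Nat.add_0_r in Hgtop; fold g in Hgtop.
    replace (1 + 2 * m)%nat with (2 * m + 1)%nat in Hg1 by lia.
    rewrite Hgtop in Hg1; unfold pcoef in Hg1; simpl nth in Hg1.
    change (INR (Factorial.fact 1)) with 1 in Hg1; rewrite Rmult_1_r in Hg1; rewrite Hg1.
    pose proof (INR_fact_lt_0 (2 * m + 1)).
    unfold sin_profile_coef, pcoef; simpl nth; field; lra.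
  - rewrite (coef_step2_iter_odd m g)
      by (reflexivity || (intros; apply pcoef_mulXn_const_even; auto)).
    unfold pcoef; simpl; ring.
Qed.

Lemma psin_chain_profile_low_coefs (k : nat) (W : list R) :
  (2 <= k)%nat ->
  pcoef (psin_chain (psin_profile (Nat.div2 k) W) k) 0 = 0 /\
  pcoef (psin_chain (psin_profile (Nat.div2 k) W) k) 1 = 0.
Proof.
  intros Hk; destruct (Nat.Even_or_Odd k) as [[m ->]|[m ->]].
  - rewrite Nat.div2_double, !pcoef_psin_chain_even.
    split; apply coef_step2_iter_profile; lia.
  - replace (2 * m + 1)%nat with (S (2 * m)) by lia.
    rewrite Nat.div2_succ_double; cbn [psin_chain].
    rewrite Nat.even_mul; cbn [Nat.even orb].
    rewrite !pcoef_deriv, !pcoef_psin_chain_even, !coef_step2_iter_profile by lia.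
    split; ring.
Qed.

Lemma pow_1_add_expansion (m : nat) (c : R) (N : nat) :
  exists W : list R, forall s : C,
    ((1 + c * s ^ (2 * m)) ^ N =
     1 + (INR N * c)%R * s ^ (2 * m) + s ^ (2 * m) * s ^ (2 * m) * peval W s)%C.
Proof.
  induction N as [|N [W HW]].
  - exists nil; intros s; replace (INR 0 * c) with 0 by (simpl; ring); simpl; Cring.
  - exists (padd (INR N * c * c :: nil) (padd W (pmulXn (2 * m) (pscale c W)))).
    intros s; rewrite Cpow_S, HW, !peval_add, peval_mulXn, peval_scale, S_INR.
    simpl peval; rewrite !RtoC_mult, RtoC_plus; Cring.
Qed.

Lemma peval_psin_profile (m N : nat) (c : R) :
  INR N * c = sin_profile_coef m ->
  exists W : list R, forall s : C,
    peval (psin_profile m W) s = (s * (1 + c * s ^ (2 * m)) ^ N)%C.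
Proof.
  intros Hc; destruct (pow_1_add_expansion m c N) as [W HW]; exists W; intros s.
  rewrite HW, Hc; unfold psin_profile; rewrite !peval_add, !peval_mulXn; simpl peval.
  replace (4 * m + 1)%nat with (S (2 * m + 2 * m)) by lia.
  replace (2 * m + 1)%nat with (S (2 * m)) by lia.
  rewrite !Cpow_S, Cpow_add_r; Cring.
Qed.

(** * Estimates *)

Lemma rpow_ge_0 (t a : R) : 0 <= rpow t a.
Proof. unfold rpow; destruct (Rle_dec t 0); [lra | left; apply exp_pos]. Qed.

Lemma Rpower_pos (x a : R) : 0 < Rpower x a.
Proof. apply exp_pos. Qed.

Lemma sqr_le_Rpower_split (t M b : R) :
  0 < t -> t <= M -> b <= 2 -> t * t <= Rpower t b * Rpower M (2 - b).
Proof.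
  intros Ht HtM Hb.
  replace (t * t) with (Rpower t b * Rpower t (2 - b)).
  - apply Rmult_le_compat_l; [left; apply Rpower_pos|].
    apply Rle_Rpower_l; lra.
  - rewrite <- Rpower_plus; replace (b + (2 - b)) with (INR 2) by (simpl; ring).
    rewrite Rpower_pow by lra; ring.
Qed.

Lemma Rpower_inv_pred_ratio (X b : R) :
  0 < X -> 1 < b -> Rpower (Rpower X (/ (b - 1))) (2 - b) / Rpower X (/ (b - 1)) = / X.
Proof.
  intros HX Hb; unfold Rdiv; rewrite Rpower_mult, <- Rpower_Ropp, <- Rpower_plus.
  replace (/ (b - 1) * (2 - b) + - / (b - 1)) with (Ropp 1) by (field; lra).
  rewrite Rpower_Ropp, Rpower_1 by lra; reflexivity.
Qed.

(* For [t > 1] split [t^2 = t^b t^(2-b)] with [b = min alpha 2] and bound [t^(2-b)] by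
   [(L G)^(2-b)]; the choice of [L] makes [L^(2-b) / L = 1 / X]. *)
Lemma quadratic_le_rpow (alpha Cb K G X t : R) :
  1 < alpha -> 0 < Cb -> 0 <= K -> 1 <= G -> 1 <= X -> K * G <= Cb * X ->
  0 <= t -> t <= Rpower X (/ (Rmin alpha 2 - 1)) * G ->
  K * (t * t) / Rpower X (/ (Rmin alpha 2 - 1)) <= Cb * (1 + rpow t alpha).
Proof.
  intros Ha HCb HK HG HX HKX Ht0 HtL.
  set (b := Rmin alpha 2) in *.
  assert (Hb1 : 1 < b) by (unfold b; apply Rmin_case; lra).
  assert (Hb2 : b <= 2) by apply Rmin_r.
  assert (Hba : b <= alpha) by apply Rmin_l.
  pose proof (Rpower_inv_pred_ratio X b ltac:(lra) Hb1) as HLb.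
  set (L := Rpower X (/ (b - 1))) in *.
  assert (HXL : X <= L).
  { unfold L; rewrite <- (Rpower_1 X) at 1 by lra; apply Rle_Rpower; [lra|].
    rewrite <- Rinv_1; apply Rinv_le_contravar; lra. }
  pose proof (rpow_ge_0 t alpha).
  apply Rle_div_l; [lra|].
  destruct (Rle_dec t 1) as [Ht1|Ht1].
  - assert (K * (t * t) <= K * 1) by (apply Rmult_le_compat_l; nra).
    assert (Cb * X <= Cb * L) by (apply Rmult_le_compat_l; lra).
    assert (0 <= Cb * L * rpow t alpha) by (apply Rmult_le_pos; nra).
    nra.
  - assert (Hrpow : rpow t alpha = Rpower t alpha)
      by (unfold rpow; destruct (Rle_dec t 0); [lra | reflexivity]).
    assert (Hsq : t * t <= Rpower t b * (Rpower L (2 - b) * G)).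
    { eapply Rle_trans; [apply (sqr_le_Rpower_split t (L * G) b); lra|].
      rewrite <- Rpower_mult_distr by lra.
      apply Rmult_le_compat_l; [left; apply Rpower_pos|].
      apply Rmult_le_compat_l; [left; apply Rpower_pos|].
      rewrite <- (Rpower_1 G) at 2 by lra; apply Rle_Rpower; lra. }
    assert (Hscale : Rpower L (2 - b) = L / X) by (unfold Rdiv; rewrite <- HLb; field; lra).
    rewrite Hscale in Hsq; rewrite Hrpow.
    assert (Htb : Rpower t b <= Rpower t alpha) by (apply Rle_Rpower; lra).
    pose proof (Rpower_pos t b).
    assert (K * (t * t) <= K * G * Rpower t b * L / X).
    { replace (K * G * Rpower t b * L / X) with (K * (Rpower t b * (L / X * G))) by (field; lra).
      apply Rmult_le_compat_l; lra. }
    assert (K * G * Rpower t b * L / X <= Cb * Rpower t b * L).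
    { apply Rle_div_l; [lra|].
      replace (Cb * Rpower t b * L * X) with ((Cb * X) * (Rpower t b * L)) by ring.
      replace (K * G * Rpower t b * L) with ((K * G) * (Rpower t b * L)) by ring.
      apply Rmult_le_compat_r; [apply Rmult_le_pos|]; lra. }
    assert (Cb * Rpower t b * L <= Cb * (1 + Rpower t alpha) * L).
    { apply Rmult_le_compat_r; [lra|]; apply Rmult_le_compat_l; lra. }
    lra.
Qed.

Lemma Cmod_1_add_between (y : C) : Cmod y <= 1/2 -> 1/2 <= Cmod (1 + y)%C <= 3/2.
Proof.
  intros Hy; pose proof (Cmod_triangle 1 y) as Hub.
  pose proof (Cmod_triangle (1 + y)%C (- y)%C) as Hlb.
  replace (1 + y + - y)%C with (RtoC 1) in Hlb by Cring.
  rewrite Cmod_1, Cmod_opp in *; lra.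
Qed.

Lemma Cmod_csin_ccos_scal_le (nu : R) (z : C) :
  0 <= nu -> Cmod z < 2 ->
  Cmod (csin (nu * z)) <= exp (2 * nu) /\ Cmod (ccos (nu * z)) <= exp (2 * nu).
Proof.
  intros Hnu Hz.
  assert (H : exp (Cmod (nu * z)%C) <= exp (2 * nu)).
  { apply exp_le_compat; rewrite Cmod_mult, Cmod_R, Rabs_pos_eq by lra.
    pose proof (Cmod_ge_0 z); nra. }
  split; eapply Rle_trans; [apply Cmod_csin_le | exact H | apply Cmod_ccos_le | exact H].
Qed.

Lemma Rabs_sin_profile_coef_le (m : nat) : Rabs (sin_profile_coef m) <= 1.
Proof.
  unfold sin_profile_coef, Rdiv.
  rewrite Rabs_mult, Rabs_Ropp, <- RPow_abs, Rabs_m1, pow1, Rmult_1_l.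
  pose proof (le_INR 1 _ (Factorial.lt_O_fact (2 * m + 1))) as Hfact.
  change (INR 1) with 1 in Hfact.
  rewrite Rabs_inv, Rabs_pos_eq by lra.
  rewrite <- Rinv_1; apply Rinv_le_contravar; lra.
Qed.

Lemma Cmod_sin_chain_le (nu L : R) (P : list R) (k : nat) (z : C) :
  0 <= nu -> 0 <= L -> Cmod z < 2 ->
  pcoef (psin_chain P k) 0 = 0 -> pcoef (psin_chain P k) 1 = 0 ->
  Cmod (sin_chain nu L P k z) <=
  L * (nu ^ k * exp (2 * nu) * pnorm (skipn 2 (psin_chain P k)) (exp (2 * nu)))
    * (Cmod (csin (nu * z)) * Cmod (csin (nu * z))).
Proof.
  intros Hnu HL Hz H0 H1.
  destruct (Cmod_csin_ccos_scal_le nu z Hnu Hz) as [Hs Hc].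
  set (Rb := exp (2 * nu)) in *; set (s := csin (nu * z)) in *.
  set (Q := skipn 2 (psin_chain P k)).
  assert (HRb : 1 <= Rb) by (unfold Rb; rewrite <- exp_0; apply exp_le_compat; lra).
  assert (HQ : Cmod (peval (psin_chain P k) s) <= Cmod s * Cmod s * pnorm Q Rb).
  { rewrite (peval_factor_sqr _ _ H0 H1), !Cmod_mult.
    apply Rmult_le_compat_l; [apply Rmult_le_pos; apply Cmod_ge_0 | now apply Cmod_peval_le]. }
  assert (HnuL : 0 <= L * nu ^ k) by (apply Rmult_le_pos; [lra | apply pow_le; lra]).
  assert (Hss : 0 <= Cmod s * Cmod s * pnorm Q Rb)
    by (apply Rmult_le_pos; [apply Rmult_le_pos; apply Cmod_ge_0 | apply pnorm_ge_0; lra]).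
  unfold sin_chain; fold s; rewrite !Cmod_mult, Cmod_R, Rabs_pos_eq by lra.
  rewrite Cmod_pow, Cmod_R, Rabs_pos_eq by lra.
  replace (L * (nu ^ k * Rb * pnorm Q Rb) * (Cmod s * Cmod s))
    with (L * nu ^ k * (Rb * (Cmod s * Cmod s * pnorm Q Rb))) by ring.
  apply Rmult_le_compat_l; [exact HnuL|].
  destruct (Nat.even k); [|rewrite Cmod_mult; apply Rmult_le_compat; auto; apply Cmod_ge_0].
  eapply Rle_trans; [exact HQ|]; nra.
Qed.

Section SinProfile.

Variables (k N : nat) (alpha Cb nu : R) (W : list R).

Let m := Nat.div2 k.
Let Rb := exp (2 * nu).
Let c := sin_profile_coef m / INR N.
Let P := psin_profile m W.
Let u0 := (1/2) ^ N.
Let G := Rb * (3/2) ^ N.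
Let K := nu ^ k * Rb * pnorm (skipn 2 (psin_chain P k)) Rb / (u0 * u0).
Let X := 2 ^ N + K * G / Cb.
Let L := Rpower X (/ (Rmin alpha 2 - 1)).

Hypothesis Hk : (2 <= k)%nat.
Hypothesis Halpha : 1 < alpha.
Hypothesis HCb : 0 < Cb.
Hypothesis Hnu : 0 <= nu.
Hypothesis HN : 2 * Rb ^ (2 * m) < INR N.
Hypothesis HW : forall s, peval P s = (s * (1 + c * s ^ (2 * m)) ^ N)%C.

Let Rb_ge_1 : 1 <= Rb.
Proof. unfold Rb; rewrite <- exp_0; apply exp_le_compat; lra. Qed.

Let u0_pos : 0 < u0.
Proof. apply pow_lt; lra. Qed.

Let G_ge_1 : 1 <= G.
Proof. pose proof (pow_R1_Rle (3/2) N ltac:(lra)); pose proof Rb_ge_1; unfold G; nra. Qed.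

Let K_ge_0 : 0 <= K.
Proof.
  pose proof Rb_ge_1; pose proof u0_pos.
  apply Rmult_le_pos; [|left; apply Rinv_0_lt_compat; nra].
  apply Rmult_le_pos; [apply Rmult_le_pos; [apply pow_le|]; lra | apply pnorm_ge_0; lra].
Qed.

Let X_bounds : 1 <= X /\ K * G <= Cb * X /\ 1 <= L * u0.
Proof.
  pose proof (pow_R1_Rle 2 N ltac:(lra)).
  pose proof K_ge_0; pose proof G_ge_1.
  assert (HKG : 0 <= K * G / Cb)
    by (apply Rmult_le_pos; [nra | left; apply Rinv_0_lt_compat; lra]).
  assert (HXL : X <= L).
  { unfold L; rewrite <- (Rpower_1 X) at 1 by (unfold X; lra).
    apply Rle_Rpower; [unfold X; lra|].
    assert (1 < Rmin alpha 2) by (apply Rmin_case; lra); pose proof (Rmin_r alpha 2).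
    rewrite <- Rinv_1; apply Rinv_le_contravar; lra. }
  assert (H2u : 2 ^ N * u0 = 1).
  { unfold u0; rewrite <- Rpow_mult_distr; replace (2 * (1/2)) with 1 by field; apply pow1. }
  split; [unfold X; lra|]; split.
  - unfold X; replace (Cb * (2 ^ N + K * G / Cb)) with (Cb * 2 ^ N + K * G) by (field; lra); nra.
  - pose proof u0_pos; unfold X in HXL; nra.
Qed.

Let c_small : Rabs c * Rb ^ (2 * m) <= 1/2.
Proof.
  assert (HN0 : 0 < INR N) by (pose proof Rb_ge_1; pose proof (pow_le Rb (2 * m) ltac:(lra)); lra).
  unfold c, Rdiv; rewrite Rabs_mult, Rabs_inv, (Rabs_pos_eq (INR N)) by lra.
  pose proof (Rabs_sin_profile_coef_le m); pose proof (Rabs_pos (sin_profile_coef m)).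
  apply (Rmult_le_reg_r (INR N)); [lra|].
  replace (Rabs (sin_profile_coef m) * / INR N * Rb ^ (2 * m) * INR N)
    with (Rabs (sin_profile_coef m) * Rb ^ (2 * m)) by (field; lra).
  pose proof Rb_ge_1; pose proof (pow_le Rb (2 * m) ltac:(lra)); nra.
Qed.

Let factor_between (s : C) :
  Cmod s <= Rb -> u0 <= Cmod ((1 + c * s ^ (2 * m)) ^ N)%C <= (3/2) ^ N.
Proof.
  intros Hs; rewrite Cmod_pow.
  assert (Hy : Cmod (c * s ^ (2 * m))%C <= 1/2).
  { rewrite Cmod_mult, Cmod_R, Cmod_pow.
    assert (Cmod s ^ (2 * m) <= Rb ^ (2 * m)) by (apply pow_incr; split; [apply Cmod_ge_0 | lra]).
    pose proof (Rabs_pos c); pose proof c_small; nra. }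
  destruct (Cmod_1_add_between _ Hy).
  split; apply pow_incr; split; lra || apply Cmod_ge_0.
Qed.

Let Cmod_profile (z : C) :
  Cmod (sin_chain nu L P 0 z)
  = L * (Cmod (csin (nu * z)) * Cmod ((1 + c * csin (nu * z) ^ (2 * m)) ^ N)%C).
Proof.
  unfold sin_chain; cbn [Nat.even psin_chain Cpow].
  rewrite HW, !Cmod_mult, Cmod_1, Cmod_R, Rabs_pos_eq; [ring | left; apply Rpower_pos].
Qed.

Definition sin_profile (j : nat) : C -> C := sin_chain nu L P j.

Let profile_estimates (z : C) :
  Cmod z < 2 ->
  Cmod (sin_chain nu L P 0 z) <= L * G /\
  Cmod (sin_chain nu L P k z)
  <= K * (Cmod (sin_chain nu L P 0 z) * Cmod (sin_chain nu L P 0 z)) / L.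
Proof.
  intros Hz.
  destruct (Cmod_csin_ccos_scal_le nu z Hnu Hz) as [Hs _]; fold Rb in Hs.
  pose proof u0_pos; pose proof K_ge_0.
  assert (HL : 0 < L) by apply Rpower_pos.
  rewrite Cmod_profile; set (s := csin (nu * z)) in *.
  destruct (factor_between s Hs) as [Hlow Hupp].
  pose proof (Cmod_ge_0 s).
  set (t := L * (Cmod s * Cmod ((1 + c * s ^ (2 * m)) ^ N)%C)).
  assert (Hst : Cmod s * u0 * L <= t).
  { unfold t; replace (Cmod s * u0 * L) with (L * (Cmod s * u0)) by ring.
    apply Rmult_le_compat_l; [lra|]; apply Rmult_le_compat_l; [apply Cmod_ge_0 | exact Hlow]. }
  split.
  - unfold t, G; apply Rmult_le_compat_l; [lra|].
    apply Rmult_le_compat; auto; apply Cmod_ge_0.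
  - destruct (psin_chain_profile_low_coefs k W Hk) as [Hc0 Hc1].
    eapply Rle_trans; [apply (Cmod_sin_chain_le nu L P k z Hnu (Rlt_le _ _ HL) Hz Hc0 Hc1)|].
    fold Rb s.
    replace (L * (nu ^ k * Rb * pnorm (skipn 2 (psin_chain P k)) Rb) * (Cmod s * Cmod s))
      with (K * ((Cmod s * u0 * L) * (Cmod s * u0 * L)) / L) by (unfold K; field; lra).
    unfold Rdiv; apply Rmult_le_compat_r; [left; apply Rinv_0_lt_compat; lra|].
    apply Rmult_le_compat_l; [lra|]; apply Rmult_le_compat; nra.
Qed.

Lemma sin_profile_deriv_bound (z : C) :
  cdisk 0 2 z ->
  Cmod (sin_profile k z) / (1 + rpow (Cmod (sin_profile 0 z)) alpha) <= Cb.
Proof.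
  intros Hz; unfold sin_profile, cdisk in Hz |- *; replace (z - 0)%C with z in Hz by Cring.
  destruct (profile_estimates z Hz) as [HtG Hfk].
  destruct X_bounds as (HX & HKX & _).
  pose proof (quadratic_le_rpow alpha Cb K G X _ Halpha HCb K_ge_0 G_ge_1 HX HKX
                (Cmod_ge_0 _) HtG) as Hq; fold L in Hq.
  pose proof (rpow_ge_0 (Cmod (sin_chain nu L P 0 z)) alpha).
  apply Rle_div_l; lra.
Qed.

Lemma sin_profile_R (x : R) :
  sin_profile 0 x = (L * (sin (nu * x) * (1 + c * sin (nu * x) ^ (2 * m)) ^ N))%C.
Proof.
  unfold sin_profile, sin_chain; cbn [Nat.even psin_chain Cpow].
  rewrite <- (RtoC_mult nu x), csin_R, HW; Cring.
Qed.

Lemma sin_profile_zero (x : R) : sin (nu * x) = 0 -> sin_profile 0 x = 0%C.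
Proof. intros Hx; rewrite sin_profile_R, Hx; Cring. Qed.

Lemma sin_profile_large (x : R) : Rabs (sin (nu * x)) = 1 -> 1 <= Cmod (sin_profile 0 x).
Proof.
  intros Hx; destruct X_bounds as (_ & _ & HLu0).
  assert (HL : 0 < L) by apply Rpower_pos.
  rewrite sin_profile_R, !Cmod_mult, Cmod_R, Cmod_R, Rabs_pos_eq, Hx by lra.
  destruct (factor_between (sin (nu * x))) as [Hlow _]; [rewrite Cmod_R, Hx; apply Rb_ge_1|].
  nra.
Qed.

End SinProfile.

Definition bounded_oscillation (k : nat) (alpha Cb nu : R) (F Fk : C -> C) : Prop :=
  kth_derivative_on (cdisk 0 2) k F Fk /\
  (forall z, cdisk 0 2 z -> Cmod (Fk z) / (1 + rpow (Cmod (F z)) alpha) <= Cb) /\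
  (forall x : R, sin (nu * x) = 0 -> F x = 0%C) /\
  (forall x : R, Rabs (sin (nu * x)) = 1 -> 1 <= Cmod (F x)).

Lemma exists_bounded_oscillation (k : nat) (alpha Cb nu : R) :
  (2 <= k)%nat -> 1 < alpha -> 0 < Cb -> 0 <= nu ->
  exists F Fk : C -> C, bounded_oscillation k alpha Cb nu F Fk.
Proof.
  intros Hk Ha HCb Hnu.
  destruct (INR_unbounded (2 * exp (2 * nu) ^ (2 * Nat.div2 k))) as [N HN].
  pose proof (pow_le _ (2 * Nat.div2 k) (Rlt_le _ _ (exp_pos (2 * nu)))).
  assert (HN0 : 0 < INR N) by lra.
  destruct (peval_psin_profile (Nat.div2 k) N (sin_profile_coef (Nat.div2 k) / INR N))
    as [W HW]; [field; lra|].
  exists (sin_profile k N alpha Cb nu W 0), (sin_profile k N alpha Cb nu W k).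
  split; [|split; [|split]].
  - exists (sin_profile k N alpha Cb nu W); split; [reflexivity|]; split; [reflexivity|].
    intros j _ z _; apply Cderiv_sin_chain.
  - now apply sin_profile_deriv_bound.
  - now apply sin_profile_zero.
  - now apply sin_profile_large.
Qed.

(** * Failure of quasi-normality *)

Definition freq (n : nat) : nat := 2 ^ n * Factorial.fact (S n).

Lemma divide_fact (q n : nat) : (1 <= q <= n)%nat -> Nat.divide q (Factorial.fact n).
Proof.
  induction n as [|n IH]; intros Hq; [lia|]; cbn [Factorial.fact].
  destruct (Nat.eq_dec q (S n)) as [->|Hne].
  - apply Nat.divide_factor_l.
  - apply Nat.divide_mul_r, IH; lia.
Qed.

Lemma fact_divide_fact (a b : nat) :
  (a <= b)%nat -> Nat.divide (Factorial.fact a) (Factorial.fact b).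
Proof.
  induction 1 as [|b _ IH]; [apply Nat.divide_refl|].
  cbn [Factorial.fact]; now apply Nat.divide_mul_r.
Qed.

Lemma divide_freq (q n : nat) : (1 <= q <= S n)%nat -> Nat.divide q (freq n).
Proof. intros Hq; apply Nat.divide_mul_r, divide_fact, Hq. Qed.

Lemma double_freq_divide_freq (n' n : nat) : (n' < n)%nat -> Nat.divide (2 * freq n') (freq n).
Proof.
  intros Hn; unfold freq; destruct (fact_divide_fact (S n') (S n)) as [j Hj]; [lia|].
  exists (2 ^ (n - S n') * j)%nat; rewrite Hj.
  replace n with (S n' + (n - S n'))%nat at 1 by lia.
  rewrite Nat.pow_add_r; cbn [Nat.pow]; ring.
Qed.

Lemma freq_gt (n : nat) : (n < freq n)%nat.
Proof.
  unfold freq; pose proof (Nat.pow_nonzero 2 n ltac:(lia)).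
  assert (S n <= Factorial.fact (S n))%nat
    by (cbn [Factorial.fact]; pose proof (Factorial.lt_O_fact n); nia).
  nia.
Qed.

Lemma sin_cos_INR_mul_PI (j : nat) : sin (INR j * PI) = 0 /\ Rabs (cos (INR j * PI)) = 1.
Proof.
  induction j as [|j [IHs IHc]].
  - simpl; rewrite Rmult_0_l, sin_0, cos_0, Rabs_R1; split; reflexivity.
  - rewrite S_INR; replace ((INR j + 1) * PI) with (INR j * PI + PI) by ring.
    rewrite neg_sin, neg_cos, IHs, Rabs_Ropp; split; [ring | exact IHc].
Qed.

Lemma sin_freq_at_shifted_point (q n' n : nat) :
  (1 <= q <= S n')%nat -> (n' < n)%nat ->
  let x := PI / INR q + PI / (2 * INR (freq n')) in
  Rabs (sin (INR (freq n') * x)) = 1 /\ sin (INR (freq n) * x) = 0.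
Proof.
  intros Hq Hn x.
  assert (Hq0 : INR q <> 0) by (apply not_0_INR; lia).
  assert (Hf0 : INR (freq n') <> 0) by (apply not_0_INR; pose proof (freq_gt n'); lia).
  destruct (divide_freq q n' Hq) as [j' Hj'].
  destruct (divide_freq q n ltac:(lia)) as [j1 Hj1].
  destruct (double_freq_divide_freq n' n Hn) as [j2 Hj2].
  assert (Hr' : INR (freq n') / INR q = INR j') by (rewrite Hj', mult_INR; field; auto).
  assert (Hr1 : INR (freq n) / INR q = INR j1) by (rewrite Hj1, mult_INR; field; auto).
  assert (Hr2 : INR (freq n) / (2 * INR (freq n')) = INR j2)
    by (rewrite Hj2, mult_INR, (mult_INR 2); change (INR 2) with 2; field; auto).
  split.
  - replace (INR (freq n') * x) with (INR (freq n') / INR q * PI + PI / 2)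
      by (unfold x; field; auto).
    rewrite Hr', sin_plus, sin_PI2, cos_PI2.
    destruct (sin_cos_INR_mul_PI j') as [Hs Hc].
    rewrite Hs, Rmult_0_l, Rmult_1_r, Rplus_0_l; exact Hc.
  - replace (INR (freq n) * x) with (INR (j1 + j2) * PI); [apply sin_cos_INR_mul_PI|].
    rewrite plus_INR, <- Hr1, <- Hr2; unfold x; field; auto.
Qed.

Lemma sqrt_prod_1_add_sqr_le (x y : R) :
  0 <= x -> 0 <= y -> sqrt ((1 + x ^ 2) * (1 + y ^ 2)) <= (1 + x) * (1 + y).
Proof.
  intros Hx Hy; rewrite <- (sqrt_square ((1 + x) * (1 + y))) by nra.
  apply sqrt_le_1_alt; nra.
Qed.

Lemma Cmod_lt_1_of_chordal_close (v : C) (w : Csph) :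
  chordal (Some (RtoC 0)) w < 1/2 -> chordal (Some v) w < 1/2 -> Cmod v < 1.
Proof.
  destruct w as [b|]; cbn [chordal]; rewrite Cmod_0; intros H0 Hv.
  - replace (0 - b)%C with (- b)%C in H0 by Cring; rewrite Cmod_opp in H0.
    pose proof (Cmod_ge_0 b); pose proof (Cmod_ge_0 v).
    set (B := Cmod b) in *; set (V := Cmod v) in *.
    pose proof (sqrt_prod_1_add_sqr_le 0 B ltac:(lra) ltac:(lra)) as S0.
    pose proof (sqrt_prod_1_add_sqr_le V B ltac:(lra) ltac:(lra)) as SV.
    assert (P0 : 0 < sqrt ((1 + 0 ^ 2) * (1 + B ^ 2))) by (apply sqrt_lt_R0; nra).
    assert (PV : 0 < sqrt ((1 + V ^ 2) * (1 + B ^ 2))) by (apply sqrt_lt_R0; nra).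
    apply Rmult_lt_compat_r with (r := sqrt ((1 + 0 ^ 2) * (1 + B ^ 2))) in H0; [|exact P0].
    apply Rmult_lt_compat_r with (r := sqrt ((1 + V ^ 2) * (1 + B ^ 2))) in Hv; [|exact PV].
    unfold Rdiv in H0, Hv; rewrite Rmult_assoc, Rinv_l, Rmult_1_r in H0, Hv by lra.
    assert (Htri : V - B <= Cmod (v - b)%C).
    { pose proof (Cmod_triangle (v - b)%C b) as Ht.
      replace (v - b + b)%C with v in Ht by Cring; fold V B in Ht; lra. }
    assert (B < 1/3) by nra.
    nra.
  - rewrite pow_i, Rplus_0_r, sqrt_1 in H0 by lia; lra.
Qed.

Lemma cdisk_R (a r x : R) : cdisk a r x = (Rabs (x - a) < r).
Proof. unfold cdisk; rewrite <- RtoC_minus, Cmod_R; reflexivity. Qed.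

Lemma exists_unit_fraction_point_off (E : C -> Prop) :
  no_accumulation_in E (cdisk 0 2) ->
  exists q : nat, (1 <= q)%nat /\ cdisk 0 2 (RtoC (PI / INR q)) /\ ~ E (RtoC (PI / INR q)).
Proof.
  intros Hacc; apply NNPP; intros Hnot.
  assert (HE : forall q, (3 <= q)%nat -> E (RtoC (PI / INR q))).
  { intros q Hq; apply NNPP; intros HnE; apply Hnot; exists q; repeat split; [lia| |exact HnE].
    pose proof PI_RGT_0; pose proof PI_4; pose proof (le_INR 3 q Hq) as H3; simpl in H3.
    rewrite cdisk_R, Rminus_0_r, Rabs_pos_eq by (apply Rlt_le, Rdiv_lt_0_compat; lra).
    apply Rlt_div_l; lra. }
  apply (Hacc 0%C); [rewrite cdisk_R, Rminus_0_r, Rabs_R0; lra|].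
  intros r Hr; destruct (INR_unbounded (PI / r)) as [q Hq].
  pose proof PI_RGT_0; pose proof (pos_INR q).
  assert (Hq2 : 0 < INR (q + 3)) by (rewrite plus_INR; simpl; lra).
  assert (Hpos : 0 < PI / INR (q + 3)) by (apply Rdiv_lt_0_compat; lra).
  exists (RtoC (PI / INR (q + 3))); split; [apply HE; lia | split].
  - intros Heq; apply RtoC_inj in Heq; lra.
  - rewrite cdisk_R, Rminus_0_r, Rabs_pos_eq by lra.
    apply Rlt_div_l; [lra|]; rewrite plus_INR; simpl.
    apply Rlt_div_l in Hq; [|lra]; simpl in Hq; nra.
Qed.

Lemma strictly_increasing_ge (phi : nat -> nat) :
  (forall m, (phi m < phi (S m))%nat) -> forall m, (m <= phi m)%nat.
Proof. intros Hinc m; induction m as [|m IH]; [lia|]; specialize (Hinc m); lia. Qed.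

Lemma not_quasi_normal_of_freq_oscillation (f : nat -> C -> C) :
  (forall n (x : R), sin (INR (freq n) * x) = 0 -> f n x = 0%C) ->
  (forall n (x : R), Rabs (sin (INR (freq n) * x)) = 1 -> 1 <= Cmod (f n x)) ->
  ~ quasi_normal_seq f (cdisk 0 2).
Proof.
  intros Hzero Hlarge QN.
  destruct (QN f) as (phi & E & h & Hinc & Hacc & Hcv); [intros m; now exists m|].
  destruct (exists_unit_fraction_point_off E Hacc) as (q & Hq & Ha & HaE).
  destruct (Hcv _ (conj Ha HaE)) as (r & Hr & _ & Hunif).
  destruct (Hunif (1/2) ltac:(lra)) as [N0 HN0].
  destruct (INR_unbounded (PI / (2 * r))) as [M HM].
  set (m := (N0 + q + M)%nat); set (n' := phi m); set (n := phi (S m)).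
  assert (Hmn' : (m <= n')%nat) by apply (strictly_increasing_ge phi Hinc).
  assert (Hn'n : (n' < n)%nat) by apply Hinc.
  destruct (sin_freq_at_shifted_point q n' n) as [Hone Hnull];
    [unfold m in Hmn'; lia | exact Hn'n |].
  set (x := PI / INR q + PI / (2 * INR (freq n'))) in *.
  assert (Hx : cdisk (RtoC (PI / INR q)) r (RtoC x)).
  { pose proof PI_RGT_0; pose proof (freq_gt n'); pose proof (pos_INR M).
    assert (HM' : INR M < INR (freq n')) by (apply lt_INR; unfold m in Hmn'; lia).
    assert (Hpos : 0 < PI / (2 * INR (freq n'))) by (apply Rdiv_lt_0_compat; lra).
    rewrite cdisk_R; unfold x; replace (PI / INR q + _ - _) with (PI / (2 * INR (freq n'))) by ring.
    rewrite Rabs_pos_eq by lra; apply Rlt_div_l; [lra|].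
    assert (PI < INR M * (2 * r)) by (apply Rlt_div_l; [lra | exact HM]).
    nra. }
  pose proof (HN0 (S m) ltac:(lia) x Hx) as Hclose_n.
  pose proof (HN0 m ltac:(lia) x Hx) as Hclose_n'.
  cbv beta in Hclose_n, Hclose_n'; fold n n' in Hclose_n, Hclose_n'.
  rewrite (Hzero n x Hnull) in Hclose_n.
  pose proof (Cmod_lt_1_of_chordal_close _ _ Hclose_n Hclose_n').
  pose proof (Hlarge n' x Hone); lra.
Qed.

Lemma holomorphic_of_kth_derivative (D : C -> Prop) (k : nat) (f g : C -> C) :
  (1 <= k)%nat -> kth_derivative_on D k f g -> holomorphic_on D f.
Proof.
  intros Hk (h & H0 & _ & Hd) z Hz; exists (h 1%nat z).
  rewrite <- H0; apply Hd; [lia | exact Hz].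
Qed.

Theorem mainTheorem2 (k : nat) (alpha Cb : R) :
  (2 <= k)%nat -> 1 < alpha -> 0 < Cb ->
  exists (f : nat -> C -> C) (fk : nat -> C -> C),
    (forall n, holomorphic_on (cdisk 0 2) (f n)) /\
    (forall n, kth_derivative_on (cdisk 0 2) k (f n) (fk n)) /\
    (forall n z, cdisk 0 2 z ->
       Cmod (fk n z) / (1 + rpow (Cmod (f n z)) alpha) <= Cb) /\
    ~ quasi_normal_seq f (cdisk 0 2).
Proof.
  intros Hk Ha HCb.
  destruct (functional_choice (fun n (p : (C -> C) * (C -> C)) =>
              bounded_oscillation k alpha Cb (INR (freq n)) (fst p) (snd p))) as [sel Hsel].
  { intros n; destruct (exists_bounded_oscillation k alpha Cb (INR (freq n)) Hk Ha HCb (pos_INR _))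
      as (F & Fk & HF).
    now exists (F, Fk). }
  exists (fun n => fst (sel n)), (fun n => snd (sel n)).
  split; [|split; [|split]].
  - intros n; apply (holomorphic_of_kth_derivative _ k _ (snd (sel n))); [lia | apply Hsel].
  - intros n; apply Hsel.
  - intros n; apply Hsel.
  - apply not_quasi_normal_of_freq_oscillation; intros n; apply Hsel.
Qed.
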